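(* Fix a single institution with category capacities $q=(q^{o},q^{SC},q^{ST},q^{OBC},q^{EWS})$ of nonnegative integers, a finite set of individuals $\mathcal{I}$ with category memberships $t:\mathcal{I}\to\mathcal{R}\cup\{GC\}$ where $\mathcal{R}=\{SC,ST,OBC,EWS\}$, and a strict merit ranking $\succ$ (a linear order) over $\mathcal{I}$. A (category-assigning) choice rule $C$ satisfies within-category fairness, the over-and-above principle, and quota-filling subject to eligibility (all defined in the context) at every set of applicants $A\subseteq\mathcal{I}$ if and only if $C$ is the over-and-above choice rule $C^{OA}$, i.e. $C^{c}(A)=C^{OA,c}(A)$ for every $A\subseteq\mathcal{I}$ and every category $c\in\{o\}\cup\mathcal{R}$.
   Context: Categories of positions are $\mathcal{C}=\{o\}\cup\mathcal{R}$, where $o$ is the open category. Individuals with $t_i=GC$ (general category) are eligible only for open-category positions; an individual with $t_i=r\in\mathcal{R}$ is eligible for open-category positions and for category-$r$ positions. For $A\subseteq\mathcal{I}$ and $r\in\mathcal{R}$ let $A^{r}=\{i\in A: t_i=r\}$, and let $rank_A(i)=k$ iff $|\{j\in A: j\succ i\}|=k-1$. A choice rule $C$ assigns to each $A\subseteq\mathcal{I}$ pairwise disjoint sets $C^{o}(A),C^{SC}(A),C^{ST}(A),C^{OBC}(A),C^{EWS}(A)\subseteq A$ with $|C^{o}(A)|\le q^{o}$, and for each $r\in\mathcal{R}$, $C^{r}(A)\subseteq A^{r}$ and $|C^{r}(A)|\le q^{r}$; the chosen set is $C(A)=\bigcup_{c\in\mathcal{C}}C^{c}(A)$. An individual is ''assigned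 a position'' if she is in $C(A)$, and ''assigned to a category-$c$ position'' if she is in $C^{c}(A)$. Axioms (for a given $A$): Over-and-above principle: every $i\in A$ with $rank_A(i)\le q^{o}$ is in $C^{o}(A)$. Within-category fairness: for $i,j\in A$ with $t_i=t_j$ and $i\succ j$, if $j\in C(A)$ then $i\in C(A)$. Quota-filling subject to eligibility: for every $r\in\mathcal{R}$, if some $i\in A$ with $t_i=r$ is not in $C(A)$, then $|C^{r}(A)|=q^{r}$. Over-and-above choice rule $C^{OA}$: Stage 1: $C^{OA,o}(A)$ is the set of the $\min(q^{o},|A|)$ highest-ranked individuals of $A$ under $\succ$. Stage 2: with $A'=A\setminus C^{OA,o}(A)$, for each $r\in\mathcal{R}$, $C^{OA,r}(A)$ is the set of the $\min(q^{r},|A'^{r}|)$ highest-ranked individuals of $A'^{r}=\{i\in A': t_i=r\}$ under $\succ$. Then $C^{OA}(A)=C^{OA,o}(A)\cup\bigcup_{r\in\mathcal{R}}C^{OA,r}(A)$. *)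

From HB Require Import structures.
From mathcomp Require Import all_boot.
Set Implicit Arguments. Unset Strict Implicit. Unset Printing Implicit Defensive.

Inductive rcat := SC | ST | OBC | EWS.

Definition rcat_eqb (a b : rcat) : bool :=
  match a, b with
  | SC, SC | ST, ST | OBC, OBC | EWS, EWS => true
  | _, _ => false
  end.
Lemma rcat_eqP : Equality.axiom rcat_eqb.
Proof. by case; case; constructor. Qed.
HB.instance Definition _ := hasDecEq.Build rcat rcat_eqP.

(* Membership of an individual: [None] = GC (general category), [Some r] = r in R. *)
Definition indiv_type := option rcat.

Inductive pos_cat := Open | Rsv of rcat.

Definition sub_type (I : finType) (t : I -> indiv_type) (A : {set I}) (r : rcat)
  : {set I} := [set i in A | t i == Some r].

Definition rank (I : finType) (succ : rel I) (A : {set I}) (i : I) : nat :=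
  #|[set j in A | succ j i]|.+1.

Definition strict_linear_order (I : finType) (succ : rel I) : Prop :=
  [/\ irreflexive succ, transitive succ &
      forall i j, i != j -> succ i j || succ j i].

Definition top (I : finType) (succ : rel I) (k : nat) (A : {set I}) : {set I} :=
  [set i in A | rank succ A i <= k].

Definition chosen (I : finType) (C : pos_cat -> {set I} -> {set I}) (A : {set I})
  : {set I} :=
  C Open A :|: C (Rsv SC) A :|: C (Rsv ST) A :|: C (Rsv OBC) A :|: C (Rsv EWS) A.

Definition is_choice_rule (I : finType) (q : pos_cat -> nat) (t : I -> indiv_type)
  (C : pos_cat -> {set I} -> {set I}) : Prop :=
  forall A : {set I},
    [/\ forall c, C c A \subset A,
        forall c c', c <> c' -> [disjoint C c A & C c' A],
        #|C Open A| <= q Open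
      & forall r, C (Rsv r) A \subset sub_type t A r /\ #|C (Rsv r) A| <= q (Rsv r)].

Definition over_and_above (I : finType) (q : pos_cat -> nat) (succ : rel I)
  (C : pos_cat -> {set I} -> {set I}) (A : {set I}) : Prop :=
  forall i, i \in A -> rank succ A i <= q Open -> i \in C Open A.

Definition within_category_fairness (I : finType) (t : I -> indiv_type) (succ : rel I)
  (C : pos_cat -> {set I} -> {set I}) (A : {set I}) : Prop :=
  forall i j, i \in A -> j \in A -> t i = t j -> succ i j ->
    j \in chosen C A -> i \in chosen C A.

Definition quota_filling (I : finType) (q : pos_cat -> nat) (t : I -> indiv_type)
  (C : pos_cat -> {set I} -> {set I}) (A : {set I}) : Prop :=
  forall r : rcat, (exists i, [/\ i \in A, t i = Some r & i \notin chosen C A]) ->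
    #|C (Rsv r) A| = q (Rsv r).

Definition C_OA (I : finType) (q : pos_cat -> nat) (t : I -> indiv_type) (succ : rel I)
  (c : pos_cat) (A : {set I}) : {set I} :=
  match c with
  | Open => top succ (q Open) A
  | Rsv r => top succ (q (Rsv r)) (sub_type t (A :\: top succ (q Open) A) r)
  end.

From Pilot Require Import Defs.
From mathcomp Require Import all_boot zify.

Set Implicit Arguments. Unset Strict Implicit. Unset Printing Implicit Defensive.

(* Over-and-above puts the [q^o] best applicants into [C^o(A)], and the open
   capacity allows nothing more.  Disjointness then confines [C^r(A)] to the
   residual category-[r] applicants [(A \ C^o(A))^r]; within-category fairness
   makes [C^r(A)] an upper set of this residual set, and quota-filling fixes its
   size to [min(q^r, |residual|)].  An upper set of a given size is the top
   segment of that size, which is [C^{OA,r}(A)].  Conversely, top segments are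
   upward closed, and an eligible applicant is rejected by [C^OA] only when
   her reserved quota is full. *)

Lemma card_set_in_count (T : finType) (A : {set T}) (P : pred T) :
  #|[set i in A | P i]| = count P (enum A).
Proof.
rewrite cardsE cardE /enum_mem size_filter count_filter.
by apply: eq_count => x; rewrite /= andbC.
Qed.

Lemma count_leq_iota k n : count (leq^~ k) (iota 1 n) = minn k n.
Proof.
elim: n => [|n IHn]; first by rewrite minn0.
by rewrite -[n.+1]addn1 iotaD count_cat IHn /=; lia.
Qed.

Lemma chosenP (I : finType) (C : pos_cat -> {set I} -> {set I}) A i :
  reflect (i \in C Open A \/ exists r, i \in C (Rsv r) A) (i \in chosen C A).
Proof.
rewrite /chosen !inE; apply: (iffP idP).
  by case/orP=> [/orP[/orP[/orP[|]|]|]|] => Hi; [left | right; eexists; exact: Hi ..].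
by case=> [-> | [[] ->]]; rewrite ?orbT.
Qed.

Section TopSegments.

Variables (I : finType) (succ : rel I).
Hypothesis succ_linear : strict_linear_order succ.
Implicit Types (A X : {set I}) (i j : I) (k : nat).

Lemma top_subset k A : top succ k A \subset A.
Proof. by apply/subsetP => i; rewrite inE => /andP[]. Qed.

Lemma ltn_rank A i j :
  i \in A -> j \in A -> succ i j -> rank succ A i < rank succ A j.
Proof.
case: succ_linear => irr tr _ Ai Aj succ_ij; rewrite /rank ltnS.
apply/proper_card/properP; split.
  by apply/subsetP => x; rewrite !inE => /andP[-> /tr]; apply.
by exists i; rewrite !inE ?Ai ?succ_ij ?irr.
Qed.

Lemma rank_inj A : {in A &, injective (rank succ A)}.
Proof.
move=> i j Ai Aj eq_rank; apply/eqP/negPn/negP => neq_ij.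
case: succ_linear => _ _ /(_ _ _ neq_ij) /orP[] succ_ij.
  by move: (ltn_rank Ai Aj succ_ij); rewrite eq_rank ltnn.
by move: (ltn_rank Aj Ai succ_ij); rewrite eq_rank ltnn.
Qed.

Lemma rank_le_card A i : i \in A -> rank succ A i <= #|A|.
Proof.
case: succ_linear => irr _ _ Ai; rewrite /rank.
apply/proper_card/properP; split; first by apply/subsetP => x; rewrite inE => /andP[].
by exists i; rewrite // !inE Ai irr.
Qed.

Lemma perm_rank_iota A : perm_eq [seq rank succ A i | i <- enum A] (iota 1 #|A|).
Proof.
have uniq_ranks : uniq [seq rank succ A i | i <- enum A].
  by rewrite map_inj_in_uniq ?enum_uniq // => i j; rewrite !mem_enum; apply: rank_inj.
have ranks_in_iota : {subset [seq rank succ A i | i <- enum A] <= iota 1 #|A|}.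
  move=> n /mapP[i]; rewrite mem_enum => Ai ->.
  by rewrite mem_iota add1n ltnS rank_le_card.
apply: uniq_perm; rewrite ?iota_uniq //.
by case: (uniq_min_size uniq_ranks ranks_in_iota); rewrite ?size_map ?size_iota -?cardE.
Qed.

Lemma card_top k A : #|top succ k A| = minn k #|A|.
Proof.
rewrite card_set_in_count -count_leq_iota -(permP (perm_rank_iota A)).
by rewrite count_map.
Qed.

Lemma card_top_notin k A i :
  i \in A -> i \notin top succ k A -> #|top succ k A| = k.
Proof.
move=> Ai; rewrite inE Ai /= -ltnNge => lt_k_rank.
by rewrite card_top; have := rank_le_card Ai; lia.
Qed.

Lemma top_succ_closed k A i j :
  i \in A -> succ i j -> j \in top succ k A -> i \in top succ k A.
Proof.
move=> Ai succ_ij; rewrite !inE Ai => /andP[Aj le_rank_k].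
exact: leq_trans (ltnW (ltn_rank Ai Aj succ_ij)) le_rank_k.
Qed.

Lemma top_eq_upclosed k A X :
  X \subset A -> {in A &, forall i j, succ i j -> j \in X -> i \in X} ->
  #|X| = minn k #|A| -> X = top succ k A.
Proof.
case: (succ_linear) => irr _ _ sub_XA X_up card_X.
have sub_X_top : X \subset top succ k A.
  apply/subsetP => i Xi; have Ai := subsetP sub_XA i Xi.
  rewrite inE Ai /= /rank; apply: leq_trans (geq_minl k #|A|); rewrite -card_X.
  rewrite (cardsD1 i X) Xi add1n ltnS; apply/subset_leq_card/subsetP => j.
  rewrite !inE => /andP[Aj succ_ji]; rewrite (X_up j i) // andbT.
  by apply: contraTneq succ_ji => ->; rewrite irr.
by apply/eqP; rewrite eqEcard sub_X_top card_top card_X /=.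
Qed.

End TopSegments.

Section OverAndAboveRuleAxioms.

Variables (I : finType) (q : pos_cat -> nat) (t : I -> indiv_type) (succ : rel I).
Hypothesis succ_linear : strict_linear_order succ.
Variable A : {set I}.
Local Notation C_OA := (C_OA q t succ).
Local Notation residual r := (Defs.sub_type t (A :\: top succ (q Open) A) r).

Lemma C_OA_within_category_fairness : within_category_fairness t succ C_OA A.
Proof.
move=> i j Ai Aj eq_tij succ_ij /chosenP chosen_j; apply/chosenP.
have [top_i | ntop_i] := boolP (i \in top succ (q Open) A); first by left.
case: chosen_j => [top_j | [r /= top_rj]].
  by case/negP: ntop_i; apply: top_succ_closed top_j.
have res_j : j \in residual r by apply: subsetP top_rj; apply: top_subset.
have res_i : i \in residual r.
  by move: ntop_i res_j; rewrite !inE Ai eq_tij /= => -> /andP[_ ->].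
by right; exists r; apply: top_succ_closed top_rj.
Qed.

Lemma C_OA_over_and_above : over_and_above q succ C_OA A.
Proof. by move=> i Ai le_rank; rewrite inE Ai. Qed.

Lemma C_OA_quota_filling : quota_filling q t C_OA A.
Proof.
move=> r [i [Ai t_i /chosenP not_chosen]].
have ntop_i : i \notin top succ (q Open) A by apply/negP => top_i; apply: not_chosen; left.
have res_i : i \in residual r by move: ntop_i; rewrite !inE Ai t_i eqxx !andbT.
apply: (card_top_notin succ_linear res_i); apply/negP => top_ri.
by apply: not_chosen; right; exists r.
Qed.

End OverAndAboveRuleAxioms.

Section AxiomsCharacterizeOverAndAbove.

Variables (I : finType) (q : pos_cat -> nat) (t : I -> indiv_type) (succ : rel I).
Variable C : pos_cat -> {set I} -> {set I}.
Hypotheses (succ_linear : strict_linear_order succ) (C_rule : is_choice_rule q t C).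
Variable A : {set I}.
Local Notation residual r := (Defs.sub_type t (A :\: C Open A) r).

Lemma mem_Rsv r i : i \in C (Rsv r) A -> i \in A /\ t i = Some r.
Proof.
have [_ _ _ /(_ r) [/subsetP sub_Cr _]] := C_rule A.
by move/sub_Cr; rewrite inE => /andP[-> /eqP].
Qed.

Lemma over_and_above_Open :
  over_and_above q succ C A -> C Open A = top succ (q Open) A.
Proof.
move=> oa; have [sub_CA _ card_CO _] := C_rule A.
apply/esym/eqP; rewrite eqEcard; apply/andP; split.
  by apply/subsetP => i; rewrite inE => /andP[]; apply: oa.
by rewrite card_top // leq_min card_CO subset_leq_card.
Qed.

Lemma Rsv_sub_residual r : C (Rsv r) A \subset residual r.
Proof.
have [_ disj _ _] := C_rule A.
have disj_r_Open : [disjoint C (Rsv r) A & C Open A] by apply: disj.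
apply/subsetP => i Cr_i; have [Ai t_i] := mem_Rsv Cr_i.
by rewrite !inE Ai t_i eqxx (disjointFr disj_r_Open Cr_i).
Qed.

Lemma chosen_residual r i :
  i \in residual r -> (i \in chosen C A) = (i \in C (Rsv r) A).
Proof.
case/setIdP => /setDP[_ not_Open] /eqP t_i.
apply/chosenP/idP => [[Open_i | [r' Cr'_i]] | Cr_i].
- by rewrite Open_i in not_Open.
- by have [_] := mem_Rsv Cr'_i; rewrite t_i => -[->].
- by right; exists r.
Qed.

Lemma fair_quota_Rsv r :
  within_category_fairness t succ C A -> quota_filling q t C A ->
  C (Rsv r) A = top succ (q (Rsv r)) (residual r).
Proof.
move=> fair qf; have [_ _ _ /(_ r) [_ card_Cr]] := C_rule A.
have sub_Cr := Rsv_sub_residual r.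
apply: top_eq_upclosed => //.
  move=> i j res_i res_j succ_ij Cr_j; rewrite -(chosen_residual res_i).
  have /setIdP[/setDP[Ai _] /eqP t_i] := res_i.
  have /setIdP[/setDP[Aj _] /eqP t_j] := res_j.
  by apply: (fair i j) => //; [rewrite t_i t_j | rewrite (chosen_residual res_j)].
have [sub_res_Cr | /subsetPn[i res_i not_Cr_i]] := boolP (residual r \subset C (Rsv r) A).
  have eq_Cr : C (Rsv r) A = residual r by apply/eqP; rewrite eqEsubset sub_Cr.
  by rewrite eq_Cr; apply/esym/minn_idPr; rewrite -eq_Cr.
have card_Cr_full : #|C (Rsv r) A| = q (Rsv r).
  have /setIdP[/setDP[Ai _] /eqP t_i] := res_i.
  by apply: qf; exists i; rewrite (chosen_residual res_i).
by rewrite card_Cr_full; apply/esym/minn_idPl; rewrite -card_Cr_full subset_leq_card.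
Qed.

End AxiomsCharacterizeOverAndAbove.

Theorem theorem1 (I : finType) (q : pos_cat -> nat) (t : I -> indiv_type)
  (succ : rel I) (C : pos_cat -> {set I} -> {set I}) :
  strict_linear_order succ ->
  is_choice_rule q t C ->
  ((forall A : {set I},
      [/\ within_category_fairness t succ C A,
          over_and_above q succ C A
        & quota_filling q t C A])
   <-> (forall (A : {set I}) (c : pos_cat), C c A = C_OA q t succ c A)).
Proof.
move=> succ_linear C_rule; split=> [axioms A c | C_eq A].
  have [fair oa qf] := axioms A.
  have C_Open := over_and_above_Open succ_linear C_rule oa.
  by case: c => [|r] //=; rewrite -C_Open; apply: fair_quota_Rsv.
have chosen_eq : chosen C A = chosen (C_OA q t succ) A by rewrite /chosen !C_eq.
split.
- move=> i j Ai Aj eq_tij succ_ij; rewrite !chosen_eq.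
  exact: C_OA_within_category_fairness.
- by move=> i Ai le_rank; rewrite C_eq; apply: C_OA_over_and_above.
- by move=> r; rewrite chosen_eq C_eq; apply: C_OA_quota_filling.
Qed.
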